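(* Let $M$ be a magma satisfying $(xy)z = xz$ and $x(yz) = xx$ for all $x,y,z\in M$. Then $M$ satisfies $xy = xz$ and $(xy)z = xy$ for all $x,y,z\in M$ if and only if $M$ avoids the magma $D$ on $\{0,1,2,3\}$ with Cayley table \[ \begin{array}{c|cccc} D & 0 & 1 & 2 & 3 \\ \hline 0 & 0 & 2 & 0 & 0 \\ 1 & 3 & 3 & 3 & 3 \\ 2 & 0 & 2 & 0 & 0 \\ 3 & 3 & 3 & 3 & 3 \end{array}. \]
   Context: A magma is a nonempty set with a binary operation, written by juxtaposition. A magma $M$ avoids a magma $F$ if no submagma of $M$ is isomorphic to $F$. In the Cayley table, the entry in row $i$, column $j$ is $i\cdot j$. *)

From mathcomp Require Import all_boot.
Set Implicit Arguments. Unset Strict Implicit. Unset Printing Implicit Defensive.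

(* The magma D on {0,1,2,3}: entry in row i, column j is i.j *)
Definition D_table : seq (seq nat) :=
  [:: [:: 0; 2; 0; 0];
      [:: 3; 3; 3; 3];
      [:: 0; 2; 0; 0];
      [:: 3; 3; 3; 3]].

Definition D_op (i j : 'I_4) : 'I_4 := inord (nth 0 (nth [::] D_table i) j).

Definition is_submagma (T : Type) (op : T -> T -> T) (S : T -> Prop) : Prop :=
  (exists x, S x) /\ (forall x y, S x -> S y -> S (op x y)).

Definition submagma_iso (T : Type) (op : T -> T -> T) (S : T -> Prop)
    (n : nat) (opF : 'I_n -> 'I_n -> 'I_n) : Prop :=
  exists f : 'I_n -> T,
    [/\ forall i, S (f i),
        injective f,
        (forall x, S x -> exists i, f i = x) &
        (forall i j, f (opF i j) = op (f i) (f j))].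

Definition avoids (T : Type) (op : T -> T -> T) (n : nat)
    (opF : 'I_n -> 'I_n -> 'I_n) : Prop :=
  ~ exists S : T -> Prop, is_submagma op S /\ submagma_iso op S opF.

From Stdlib Require Import Classical.
From mathcomp Require Import all_boot.

Set Implicit Arguments.
Unset Strict Implicit.
Unset Printing Implicit Defensive.

(* Under (xy)z = xz, the two identities to be characterised say exactly that xy = xx,
   i.e. that every left multiplication is constant.  This property passes to
   submagmas and D lacks it (0.1 = 2 but 0.0 = 0), so such an M avoids D.
   Conversely, if ab <> aa then, by the two defining identities, the elements
   aa, b, ab, bb are pairwise distinct and multiply exactly as 0, 1, 2, 3 in D. *)

Definition left_constant {T : Type} (op : T -> T -> T) : Prop :=
  forall x y, op x y = op x x.

Lemma left_constant_inj_morph (T U : Type) (op : T -> T -> T)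
    (opU : U -> U -> U) (f : U -> T) :
  injective f -> {morph f : x y / opU x y >-> op x y} ->
  left_constant op -> left_constant opU.
Proof. by move=> f_inj f_morph op_lc x y; apply: f_inj; rewrite !f_morph op_lc. Qed.

Lemma avoids_of_left_constant (T : Type) (op : T -> T -> T) (n : nat)
    (opF : 'I_n -> 'I_n -> 'I_n) :
  ~ left_constant opF -> left_constant op -> avoids op opF.
Proof.
move=> opF_nlc op_lc [S [_ [f [_ f_inj _ f_morph]]]].
exact: opF_nlc (left_constant_inj_morph f_inj f_morph op_lc).
Qed.

Lemma not_avoids_of_inj_morph (T : Type) (op : T -> T -> T) (n : nat)
    (opF : 'I_n.+1 -> 'I_n.+1 -> 'I_n.+1) (f : 'I_n.+1 -> T) :
  injective f -> {morph f : i j / opF i j >-> op i j} -> ~ avoids op opF.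
Proof.
move=> f_inj f_morph; apply; exists (fun x => exists i, f i = x); split.
  split; first by exists (f ord0), ord0.
  by move=> _ _ [i <-] [j <-]; exists (opF i j); rewrite f_morph.
by exists f; split=> // i; exists i.
Qed.

Lemma D_op_not_left_constant : ~ left_constant D_op.
Proof. by move=> /(_ ord0 (inord 1)) /(congr1 val); rewrite /D_op /= !inordK. Qed.

Section LeftConstantCriterion.

Variables (T : Type) (op : T -> T -> T).
Hypothesis op_drop_middle : forall x y z, op (op x y) z = op x z.
Hypothesis op_right_square : forall x y z, op x (op y z) = op x x.

Lemma left_constant_iff :
  ((forall x y z, op x y = op x z) /\ (forall x y z, op (op x y) z = op x y))
  <-> left_constant op.
Proof.
split=> [[op_lc _] x y | op_lc]; first exact: op_lc.
by split=> x y z; rewrite ?op_drop_middle op_lc [RHS]op_lc.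
Qed.

Definition D_copy (a b : T) (i : 'I_4) : T :=
  nth (op a a) [:: op a a; b; op a b; op b b] i.

Lemma D_copy_morph (a b : T) :
  {morph D_copy a b : i j / D_op i j >-> op i j}.
Proof.
move=> [[|[|[|[|i]]]] Hi] [[|[|[|[|j]]]] Hj] //;
by rewrite /D_copy /D_op /= inordK //= ?op_drop_middle ?op_right_square.
Qed.

Section Distinctness.

Variables a b : T.
Hypothesis ab_neq_aa : op a b <> op a a.

(* Left multiplication by a is constant on products, so b is not a product. *)
Lemma b_neq_op (x y : T) : b <> op x y.
Proof. by move=> b_eq; apply: ab_neq_aa; rewrite b_eq op_right_square. Qed.

Lemma aa_neq_bb : op a a <> op b b.
Proof.
by move=> aa_eq; apply: ab_neq_aa; rewrite -(op_drop_middle a a b) aa_eq op_drop_middle -aa_eq.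
Qed.

Lemma ab_neq_bb : op a b <> op b b.
Proof.
move=> ab_eq; apply: aa_neq_bb.
by rewrite -[LHS](op_right_square a a a) -(op_drop_middle a b) ab_eq op_drop_middle op_right_square.
Qed.

Lemma D_copy_inj : injective (D_copy a b).
Proof.
have := b_neq_op; have := aa_neq_bb; have := ab_neq_bb; have := ab_neq_aa.
rewrite /not => ab_naa ab_nbb aa_nbb b_nprod.
move=> [[|[|[|[|i]]]] Hi] [[|[|[|[|j]]]] Hj] //; rewrite /D_copy /= => eq_ij;
  first [exact: val_inj | exfalso; eauto using eq_sym].
Qed.

End Distinctness.

Lemma left_constant_of_avoids_D : avoids op D_op -> left_constant op.
Proof.
move=> op_avoids a b; apply: NNPP => ab_neq_aa.
exact: not_avoids_of_inj_morph (D_copy_inj ab_neq_aa) (D_copy_morph a b) op_avoids.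
Qed.

End LeftConstantCriterion.

Theorem mainTheorem14 (T : Type) (op : T -> T -> T) (t0 : T)
  (H1 : forall x y z, op (op x y) z = op x z)
  (H2 : forall x y z, op x (op y z) = op x x) :
  ((forall x y z, op x y = op x z) /\ (forall x y z, op (op x y) z = op x y))
  <-> avoids op D_op.
Proof.
apply: iff_trans (left_constant_iff H1) _; split.
- exact: avoids_of_left_constant D_op_not_left_constant.
- exact: left_constant_of_avoids_D.
Qed.
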